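(* Let $G=(V,E)$ be a finite simple undirected graph with zipper constraint collection $\mathcal{Z}$, let $D\subseteq Z^2$, and let $\mathbb{S}\subseteq D$ be a prescription on $D$. Suppose $\mathcal{K}=\{K_1,\dots,K_m\}$ is a clique cover of $G$ that is faithful to $\mathbb{S}$. Then the collection $\mathcal{K}^+=\{\mathrm{expand}(K):K\in\mathcal{K}\}$ is a clique cover of the augmented graph $G^+(\mathbb{S})$.
   Context: A clique cover of a graph is a collection of cliques whose union is the whole vertex set. A zipper constraint collection for $G$ is a finite set $\mathcal{Z}=\{(U_1,W_1,y_1),\dots,(U_m,W_m,y_m)\}$, where each $U_i,W_i\in E$ is an edge (a 2-element subset of $V$) and each $y_i$ is a label. Let $Z^2=\{U_1,\dots,U_m,W_1,\dots,W_m\}$. A prescription on $D\subseteq Z^2$ is a subset $\mathbb{S}\subseteq D$; the elements of $D\setminus\mathbb{S}$ are off pairs. A clique cover $\mathcal{K}$ of $G$ is faithful to $\mathbb{S}$ if (1) every $P\in\mathbb{S}$ is contained in some clique of $\mathcal{K}$, and (2) no $P\in D\setminus\mathbb{S}$ is contained in any clique of $\mathcal{K}$. Let $G'=(V,E\setminus(D\setminus\mathbb{S}))$. The augmented graph $G^+(\mathbb{S})=(V^+,E^+)$ has vertex set $V^+=\{[u]:u\in V\}\cup\{[u,w]:\{u,w\}\in\mathbb{S}\}$. Each vertex $[A]$ is a new formal vertex labeled by $A$, which is a singleton or a pair. Two distinct vertices $[A],[B]$ are adjacent if and only if $A\cup B$ is a clique in $G'$. For $T\subseteq V$, its expansion is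 $\mathrm{expand}(T)=\{[A]\in V^+ : A\subseteq T\}$. *)

(* finite simple graphs as symmetric irreflexive relations on a finType. *)
From mathcomp Require Import all_boot.
Set Implicit Arguments. Unset Strict Implicit. Unset Printing Implicit Defensive.

Section Defs.
Variable T : finType.
Variable e : rel T.

Definition is_edge (P : {set T}) : bool :=
  [exists x, exists y, [&& x != y, e x y & P == [set x; y]]].

Definition is_clique (K : {set T}) : bool :=
  [forall x in K, forall y in K, (x != y) ==> e x y].

Definition is_clique_cover (KK : {set {set T}}) : bool :=
  [forall K in KK, is_clique K] && (\bigcup_(K in KK) K == [set: T]).

Definition zipper_collection (L : Type) (Z : seq ({set T} * {set T} * L)) : bool :=
  all (fun z => is_edge z.1.1 && is_edge z.1.2) Z.

Definition Z2 (L : Type) (Z : seq ({set T} * {set T} * L)) : {set {set T}} :=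
  [set P | has (fun z => (P == z.1.1) || (P == z.1.2)) Z].

Definition faithful (D S : {set {set T}}) (KK : {set {set T}}) : Prop :=
  (forall P, P \in S -> exists2 K, K \in KK & P \subset K) /\
  (forall P, P \in D :\: S -> forall K, K \in KK -> ~~ (P \subset K)).

Definition adj' (D S : {set {set T}}) (x y : T) : bool :=
  e x y && ([set x; y] \notin D :\: S).

Definition is_clique' (D S : {set {set T}}) (K : {set T}) : bool :=
  [forall x in K, forall y in K, (x != y) ==> adj' D S x y].

(* Vertex set V^+ of the augmented graph: [u] for u in V, and [u,w] for {u,w} in S.
   A vertex [A] is represented by its label A : {set T}. *)
Definition Vplus (S : {set {set T}}) : {set {set T}} :=
  [set A | [exists u, A == [set u]] || (A \in S)].

Definition adjplus (D S : {set {set T}}) (A B : {set T}) : bool :=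
  (A != B) && is_clique' D S (A :|: B).

Definition is_clique_plus (D S : {set {set T}}) (X : {set {set T}}) : bool :=
  (X \subset Vplus S) &&
  [forall A in X, forall B in X, (A != B) ==> adjplus D S A B].

Definition is_clique_cover_plus (D S : {set {set T}}) (KK : {set {set {set T}}}) : bool :=
  [forall X in KK, is_clique_plus D S X] && (\bigcup_(X in KK) X == Vplus S).

Definition expand (S : {set {set T}}) (K : {set T}) : {set {set T}} :=
  [set A in Vplus S | A \subset K].

End Defs.

(* Each clique K of a faithful cover contains no off pair, so K is still a
   clique of G'; every vertex of expand(K) has its label inside K, hence any two
   of them have their union inside K and are adjacent in G^+.  Singletons are
   covered because the K cover V, and pairs of S because faithfulness puts each
   of them inside some K. *)
From mathcomp Require Import all_boot.

Set Implicit Arguments.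
Unset Strict Implicit.
Unset Printing Implicit Defensive.

Section AugmentedGraph.
Variables (T : finType) (e : rel T) (D S : {set {set T}}).

Lemma clique'_avoiding_off_pairs (K : {set T}) :
  is_clique e K -> (forall P, P \in D :\: S -> ~~ (P \subset K)) ->
  is_clique' e D S K.
Proof.
move=> /forall_inP cliqueK offK.
apply/forall_inP => x xK; apply/forall_inP => y yK; apply/implyP => neq_xy.
rewrite /adj' (implyP (forall_inP (cliqueK x xK) y yK) neq_xy) /=.
by apply/negP => /offK; rewrite subUset !sub1set xK yK.
Qed.

Lemma clique'S (K K' : {set T}) :
  K' \subset K -> is_clique' e D S K -> is_clique' e D S K'.
Proof.
move=> /subsetP subK /forall_inP cliqueK.
apply/forall_inP => x /subK xK; apply/forall_inP => y /subK yK.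
exact: forall_inP (cliqueK x xK) y yK.
Qed.

Lemma expand_clique_plus (K : {set T}) :
  is_clique' e D S K -> is_clique_plus e D S (expand S K).
Proof.
move=> cliqueK; apply/andP; split.
  by apply/subsetP => A; rewrite inE => /andP [].
apply/forall_inP => A; rewrite inE => /andP [_ AK].
apply/forall_inP => B; rewrite inE => /andP [_ BK].
apply/implyP => neq_AB; rewrite /adjplus neq_AB /=.
by apply: clique'S cliqueK; rewrite subUset AK BK.
Qed.

Lemma cover_expand (KK : {set {set T}}) :
  \bigcup_(K in KK) K = [set: T] ->
  (forall P, P \in S -> exists2 K, K \in KK & P \subset K) ->
  \bigcup_(X in [set expand S K | K in KK]) X = Vplus S.
Proof.
move=> coverKK coverS; apply/setP => A; apply/bigcupP/idP.
  by case=> _ /imsetP [K _ ->]; rewrite inE => /andP [].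
move=> VA; suff [K KK_K AK] : exists2 K, K \in KK & A \subset K.
  by exists (expand S K); [apply: imset_f | rewrite inE VA AK].
move: (VA); rewrite inE => /orP [/existsP [u /eqP ->] | /coverS //].
have : u \in \bigcup_(K in KK) K by rewrite coverKK inE.
by case/bigcupP => K KK_K uK; exists K; rewrite ?sub1set.
Qed.

End AugmentedGraph.

Theorem mainTheorem3 (T : finType) (e : rel T)
  (e_sym : symmetric e) (e_irr : irreflexive e)
  (L : Type) (Z : seq ({set T} * {set T} * L)) (HZ : zipper_collection e Z)
  (D S : {set {set T}}) (HD : D \subset Z2 Z) (HS : S \subset D)
  (KK : {set {set T}}) (Hcover : is_clique_cover e KK) (Hfaith : faithful D S KK) :
  is_clique_cover_plus e D S [set expand S K | K in KK].
Proof.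
case/andP: Hcover => /forall_inP cliques /eqP coverKK.
case: Hfaith => coverS offS.
apply/andP; split; last by rewrite (cover_expand coverKK coverS).
apply/forall_inP => _ /imsetP [K KK_K ->].
apply: expand_clique_plus.
exact: clique'_avoiding_off_pairs (cliques K KK_K) (fun P P_off => offS P P_off K KK_K).
Qed.
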